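(* Let $P$ be a rooted forest on $[n]$ whose labeling is natural, let $x_1,\dots,x_n$ be strictly positive reals, and let $x_{\preceq i}=\sum_{j\preceq i}x_j$. Set $$Z_P=\prod_{i=1}^n\frac{x_{\preceq i}}{x_1+\cdots+x_i},\qquad w(\pi)=\prod_{i=1}^{n}\frac{x_1+\cdots+x_i}{x_{\pi_1}+\cdots+x_{\pi_i}}\quad(\pi\in\mathcal{L}(P)).$$ Then $Z_P$ is the partition function of the promotion graph, i.e. $\sum_{\pi\in\mathcal{L}(P)}Z_P\,w(\pi)=1$.
   Context: A rooted tree is a connected finite poset in which each element is covered by at most one element (has at most one successor); a rooted forest is a disjoint union of rooted trees. Natural labeling: $i\prec j$ implies $i<j$. $\mathcal{L}(P)=\{\pi\in S_n : i\prec j \Rightarrow \pi^{-1}_i<\pi^{-1}_j\}$, in one-line notation $\pi=\pi_1\cdots\pi_n$. (The function $w$ is the stationary state of the promotion graph Markov chain normalized by $w(e)=1$.) *)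

From mathcomp Require Import all_boot all_order all_algebra all_fingroup.
Set Implicit Arguments. Unset Strict Implicit. Unset Printing Implicit Defensive.
Import Order.TTheory GRing.Theory Num.Theory.
Local Open Scope ring_scope.

(* Elements of [n] are represented by 'I_n: ordinal i stands for label i+1. *)

Definition is_partial_order n (le : rel 'I_n) : Prop :=
  [/\ reflexive le, antisymmetric le & transitive le].

Definition strict n (le : rel 'I_n) (i j : 'I_n) : bool := le i j && (i != j).

Definition covers n (le : rel 'I_n) (i j : 'I_n) : bool :=
  strict le i j && [forall k, ~~ (strict le i k && strict le k j)].

Definition rooted_forest n (le : rel 'I_n) : Prop :=
  is_partial_order le /\
  forall i j1 j2 : 'I_n, covers le i j1 -> covers le i j2 -> j1 = j2.

Definition natural_labeling n (le : rel 'I_n) : Prop :=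
  forall i j : 'I_n, strict le i j -> (i < j)%N.

(* linear extensions: pi in one-line notation pi_k = pi k;
   i ≺ j implies pi^{-1}(i) < pi^{-1}(j) *)
Definition linext n (le : rel 'I_n) : {set {perm 'I_n}} :=
  [set pi : {perm 'I_n} | [forall i, forall j,
      strict le i j ==> ((pi^-1)%g i < (pi^-1)%g j)%N]].

Definition xdown (R : pzRingType) n (le : rel 'I_n) (x : 'I_n -> R) (i : 'I_n) : R :=
  \sum_(j | le j i) x j.

(* x_1 + ... + x_i  (i.e. first i+1 labels for ordinal i) *)
Definition xprefix (R : pzRingType) n (x : 'I_n -> R) (i : 'I_n) : R :=
  \sum_(j : 'I_n | (j <= i)%N) x j.

Definition Z_P (R : fieldType) n (le : rel 'I_n) (x : 'I_n -> R) : R :=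
  \prod_(i : 'I_n) (xdown le x i / xprefix x i).

Definition w_pi (R : fieldType) n (x : 'I_n -> R) (pi : {perm 'I_n}) : R :=
  \prod_(i : 'I_n) (xprefix x i / \sum_(k : 'I_n | (k <= i)%N) x (pi k)).

From mathcomp Require Import all_boot all_order all_algebra all_fingroup.
From mathcomp Require Import zify.
Import Order.TTheory GRing.Theory Num.Theory.
Set Implicit Arguments. Unset Strict Implicit. Unset Printing Implicit Defensive.

(* Z_P w(pi) = (prod_i x_{<=i}) / prod_k (x_{pi_1} + ... + x_{pi_k}), so it
   suffices that, for every down-closed set A, the sum over the linear
   extensions s of A of prod_k (x_{s_1} + ... + x_{s_k})^-1 is
   prod_{i in A} x_{<=i}^-1.  By induction on |A|: the last letter r of s is a
   maximal element of A and contributes the factor x_A^-1, and in a forest the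
   maximal elements of A partition A into the down-sets of its maximal
   elements, so that sum_r x_{<=r} = x_A. *)

Lemma sumr_pos_neq0 (R : numDomainType) (I : finType) (P : pred I) (F : I -> R) i :
  (forall j, 0 < F j)%R -> P i -> (\sum_(j | P j) F j != 0)%R.
Proof.
move=> F_gt0 Pi; rewrite psumr_neq0 => [|j _]; last exact: ltW.
by apply/hasP; exists i; rewrite ?mem_index_enum ?Pi ?F_gt0.
Qed.

Lemma pairwise_enum_ord n (r : rel 'I_n) :
  pairwise r (enum 'I_n) = [forall i : 'I_n, forall j : 'I_n, (i < j)%N ==> r i j].
Proof.
case: n r => [|n] r.
  by rewrite enum_ord0; apply/esym/forallP => -[].
apply/(pairwiseP ord0)/forallP => H.
  move=> i; apply/forallP => j; apply/implyP => lt_ij.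
  by have := H i j; rewrite !inE size_enum_ord !nth_ord_enum; apply.
move=> i j; rewrite !inE size_enum_ord => lt_i lt_j lt_ij.
rewrite -[i]/(val (Ordinal lt_i)) -[j]/(val (Ordinal lt_j)) !nth_ord_enum.
exact: (implyP (forallP (H (Ordinal lt_i)) (Ordinal lt_j)) lt_ij).
Qed.

Lemma take_enum_ord n (i : 'I_n) :
  take i.+1 (enum 'I_n) = [seq k : 'I_n <- enum 'I_n | (k <= i)%N].
Proof.
apply: (inj_map val_inj).
rewrite map_take val_enum_ord take_iota (minn_idPl (ltn_ord i)).
by rewrite -(filter_iota_leq 0 (ltn_ord i)) -val_enum_ord filter_map.
Qed.

Section Forest.
Variables (n : nat) (le : rel 'I_n).
Hypotheses (forest : rooted_forest le) (natural : natural_labeling le).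

Lemma forest_refl i : le i i.
Proof. by case: forest => [[? ? ?] _]. Qed.

Lemma forest_trans i j k : le i j -> le j k -> le i k.
Proof. by case: forest => [[_ _ le_trans] _]; apply: le_trans. Qed.

Lemma exists_cover_between j a : strict le j a -> exists2 c, covers le j c & le c a.
Proof.
move=> lt_ja.
have Pa : [pred c | strict le j c && le c a] a by rewrite /= lt_ja forest_refl.
case: (arg_minnP (fun c : 'I_n => val c) Pa) => c /andP[lt_jc le_ca] c_min.
exists c => //; rewrite /covers lt_jc /=.
apply/forallP => k; apply/negP => /andP[lt_jk /[dup] lt_kc /andP[le_kc _]].
have := c_min k; rewrite /= lt_jk (forest_trans le_kc le_ca) => /(_ isT).
by have := natural lt_kc; lia.
Qed.

Lemma forest_upper_chain j a b : le j a -> le j b -> le a b || le b a.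
Proof.
have [m] := ubnP (n - j); elim: m j => // m IH j lt_m le_ja le_jb.
case: (eqVneq j a) => [<-|ne_ja]; first by rewrite le_jb.
case: (eqVneq j b) => [<-|ne_jb]; first by rewrite le_ja orbT.
have [c cov_jc le_ca] := exists_cover_between (introT andP (conj le_ja ne_ja)).
have [c' cov_jc' le_c'b] := exists_cover_between (introT andP (conj le_jb ne_jb)).
have /esym eq_cc' : c = c' by case: forest => _ /(_ j c c'); apply.
subst c'; apply: (IH c) => //.
have lt_jc : (j < c)%N by apply: natural; case/andP: cov_jc.
by have := ltn_ord c; lia.
Qed.

Definition down_closed (A : {set 'I_n}) := forall i j, le i j -> j \in A -> i \in A.

Definition maximal_in (A : {set 'I_n}) r :=
  (r \in A) && [forall j in A, ~~ strict le r j].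

Lemma exists_maximal_above (A : {set 'I_n}) j :
  j \in A -> exists2 r, maximal_in A r & le j r.
Proof.
move=> jA.
have Pj : [pred r | (r \in A) && le j r] j by rewrite /= jA forest_refl.
case: (arg_maxnP (fun c : 'I_n => val c) Pj) => r /andP[rA le_jr] r_max.
exists r => //; rewrite /maximal_in rA /=.
apply/forall_inP => k kA; apply/negP => /[dup] lt_rk /andP[le_rk _].
have := r_max k; rewrite /= kA (forest_trans le_jr le_rk) => /(_ isT).
by have := natural lt_rk; lia.
Qed.

Lemma maximal_above_unique (A : {set 'I_n}) j r1 r2 :
  maximal_in A r1 -> maximal_in A r2 -> le j r1 -> le j r2 -> r1 = r2.
Proof.
move=> /andP[r1A /forall_inP max1] /andP[r2A /forall_inP max2] le_jr1 le_jr2.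
case/orP: (forest_upper_chain le_jr1 le_jr2) => [le12|le21].
  by apply/eqP/negbNE; have := max1 _ r2A; rewrite /strict le12.
by apply/esym/eqP/negbNE; have := max2 _ r1A; rewrite /strict le21.
Qed.

Lemma down_closedD1 A r : down_closed A -> maximal_in A r -> down_closed (A :\ r).
Proof.
move=> closedA /andP[_ /forall_inP maxr] i j le_ij; rewrite !in_setD1.
case/andP=> ne_jr jA; rewrite (closedA _ _ le_ij jA) andbT.
apply/eqP => eq_ir; have := maxr _ jA.
by rewrite /strict -eq_ir le_ij eq_sym eq_ir ne_jr.
Qed.

Local Open Scope ring_scope.
Variables (R : realFieldType) (x : 'I_n -> R).
Hypothesis x_gt0 : forall i, 0 < x i.

Lemma sum_xdown_maximal (A : {set 'I_n}) : down_closed A ->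
  \sum_(r | maximal_in A r) xdown le x r = \sum_(j in A) x j.
Proof.
move=> closedA; rewrite /xdown (exchange_big_dep xpredT) //= [RHS]big_mkcond /=.
apply: eq_bigr => j _; case: (boolP (j \in A)) => jA.
  have [r0 max_r0 le_jr0] := exists_maximal_above jA.
  apply: (big_pred1 r0) => r /=; apply/andP/eqP => [[max_r le_jr]|->//].
  exact: maximal_above_unique max_r max_r0 le_jr le_jr0.
apply: big_pred0 => r /=; apply/andP => -[/andP[rA _] le_jr].
by move: jA; rewrite (closedA _ _ le_jr rA).
Qed.

Lemma xdown_neq0 i : xdown le x i != 0.
Proof. exact: sumr_pos_neq0 (forest_refl i). Qed.

End Forest.

Section LinextSeqs.
Variables (n : nat) (le : rel 'I_n).
Hypotheses (forest : rooted_forest le) (natural : natural_labeling le).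
Local Open Scope ring_scope.
Variables (R : realFieldType) (x : 'I_n -> R).
Hypothesis x_gt0 : forall i, 0 < x i.

Fixpoint seqs_of_size m : seq (seq 'I_n) :=
  if m is m'.+1 then [seq rcons s r | s <- seqs_of_size m', r <- index_enum 'I_n]
  else [:: [::]].

Lemma seqs_of_size_uniq m : uniq (seqs_of_size m).
Proof.
elim: m => //= m IH; apply: allpairs_uniq => //; first exact: index_enum_uniq.
by move=> [s1 r1] [s2 r2] _ _ /= /rcons_inj [-> ->].
Qed.

Lemma mem_seqs_of_size m s : (s \in seqs_of_size m) = (size s == m).
Proof.
elim: m s => [|m IH] s /=; first by rewrite inE; case: s.
apply/allpairsP/idP => [[[s' r] [s'_in _ ->]]|].
  by rewrite size_rcons eqSS -IH.
case/lastP: s => [|s' r] //; rewrite size_rcons eqSS => size_s'.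
by exists (s', r); rewrite IH size_s' mem_index_enum.
Qed.

(* A linear extension of the subposet A, in one-line notation. *)
Definition linext_seq (A : {set 'I_n}) s :=
  [&& uniq s, [forall i, (i \in s) == (i \in A)] & pairwise (fun a b => ~~ strict le b a) s].

Definition prefix_inv_prod (s : seq 'I_n) : R :=
  \prod_(k < size s) (\sum_(j <- take k.+1 s) x j)^-1.

Lemma prefix_inv_prod_rcons s r :
  prefix_inv_prod (rcons s r) = prefix_inv_prod s * (\sum_(j <- rcons s r) x j)^-1.
Proof.
rewrite /prefix_inv_prod size_rcons big_ord_recr take_oversize ?size_rcons //=.
by congr (_ * _); apply: eq_bigr => k _; rewrite -cats1 takel_cat.
Qed.

Lemma linext_seq_rcons A s r :
  linext_seq A (rcons s r) = maximal_in le A r && linext_seq (A :\ r) s.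
Proof.
rewrite /linext_seq rcons_uniq pairwise_rcons.
apply/idP/idP.
  move=> /and3P[/andP[r_notin_s uniq_s] /forallP mem_s /andP[r_top pw_s]].
  have rA : r \in A by rewrite -(eqP (mem_s r)) mem_rcons mem_head.
  rewrite /maximal_in rA uniq_s pw_s andbT /=; apply/andP; split.
    apply/forall_inP => j; rewrite -(eqP (mem_s j)) mem_rcons in_cons.
    by case/orP=> [/eqP->|js]; [rewrite /strict eqxx andbF | exact: (allP r_top)].
  apply/forallP => i; rewrite in_setD1 -(eqP (mem_s i)) mem_rcons in_cons.
  by case: (eqVneq i r) => [->|_] /=; rewrite ?(negbTE r_notin_s).
move=> /andP[/andP[rA /forall_inP max_r] /and3P[uniq_s /forallP mem_s pw_s]].
have r_notin_s : r \notin s by rewrite (eqP (mem_s r)) setD11.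
rewrite r_notin_s uniq_s pw_s /= andbT; apply/andP; split.
  apply/forallP => i; rewrite mem_rcons in_cons (eqP (mem_s i)) in_setD1.
  by case: (eqVneq i r) => [->|_] /=; rewrite ?rA.
apply/allP => j js; apply: max_r.
by move: js; rewrite (eqP (mem_s j)) in_setD1 => /andP[].
Qed.

Lemma sum_linext_seq A s : linext_seq A s -> \sum_(j <- s) x j = \sum_(j in A) x j.
Proof.
case/and3P=> uniq_s /forallP mem_s _; rewrite big_uniq //.
by apply: eq_bigl => i; apply/eqP.
Qed.

Lemma sum_linext_seqsS m (A : {set 'I_n}) :
  \sum_(s <- seqs_of_size m.+1 | linext_seq A s) prefix_inv_prod s =
  \sum_(r | maximal_in le A r)
     (\sum_(s <- seqs_of_size m | linext_seq (A :\ r) s) prefix_inv_prod s)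
     / \sum_(j in A) x j.
Proof.
rewrite /= big_mkcond big_allpairs_dep /= exchange_big /= [RHS]big_mkcond /=.
apply: eq_bigr => r _; under eq_bigr => s _ do rewrite linext_seq_rcons.
case: (boolP (maximal_in le A r)) => /= [max_r|_]; last by rewrite big1.
rewrite -big_mkcond big_distrl /=; apply: eq_bigr => s lin_s.
rewrite prefix_inv_prod_rcons -cats1 big_cat big_seq1 (sum_linext_seq lin_s).
case/andP: max_r => rA _; rewrite [in RHS](bigD1 r) //= addrC.
by congr (_ * (_ + _)^-1); apply: eq_bigl => j; rewrite in_setD1 andbC.
Qed.

Lemma sum_prefix_inv_prod_linext (A : {set 'I_n}) : down_closed le A ->
  \sum_(s <- seqs_of_size #|A| | linext_seq A s) prefix_inv_prod s =
  \prod_(i in A) (xdown le x i)^-1.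
Proof.
move cardA: #|A| => m; elim: m A cardA => [|m IH] A cardA closedA.
  rewrite (cards0_eq cardA) big_set0 /= big_cons big_nil addr0.
  have -> : linext_seq set0 [::].
    by rewrite /linext_seq /= andbT; apply/forallP => i; rewrite in_set0.
  exact: big_ord0.
have step r : maximal_in le A r ->
    (\sum_(s <- seqs_of_size m | linext_seq (A :\ r) s) prefix_inv_prod s)
      / \sum_(j in A) x j =
    xdown le x r * \prod_(i in A) (xdown le x i)^-1 / \sum_(j in A) x j.
  move=> /[dup] max_r /andP[rA _]; rewrite IH; last 2 first.
  - by move: cardA; rewrite (cardsD1 r) rA add1n => -[].
  - exact: down_closedD1.
  rewrite [\prod_(i in A) _](bigD1 r rA) /= mulVKf ?xdown_neq0 //.
  by congr (_ / _); apply: eq_bigl => i; rewrite in_setD1 andbC.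
have [r0 r0A] : exists r, r \in A by apply/card_gt0P; rewrite cardA.
rewrite sum_linext_seqsS (eq_bigr _ step) -!big_distrl /= sum_xdown_maximal //.
by rewrite mulrAC mulfV ?mul1r // (sumr_pos_neq0 x_gt0 r0A).
Qed.

End LinextSeqs.

Section OneLine.
Variables (n : nat) (le : rel 'I_n).

Definition oneline (pi : {perm 'I_n}) := [seq pi i | i <- enum 'I_n].

Lemma oneline_inj : injective oneline.
Proof.
move=> p1 p2 eq_p; apply/permP => i.
have nth_oneline pi : nth i (oneline pi) i = pi i.
  by rewrite (nth_map i) ?size_enum_ord //; congr (pi _); exact: nth_ord_enum.
by rewrite -nth_oneline eq_p nth_oneline.
Qed.

Lemma linext_seq_oneline pi : linext_seq le setT (oneline pi) = (pi \in linext le).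
Proof.
rewrite /linext_seq map_inj_uniq ?enum_uniq //=; last exact: perm_inj.
have -> : [forall i, (i \in oneline pi) == (i \in [set: 'I_n])].
  apply/forallP => i; rewrite in_setT; apply/eqP/mapP.
  by exists (pi^-1 i)%g; rewrite ?mem_enum ?permKV.
rewrite pairwise_map pairwise_enum_ord inE /=.
apply/forallP/forallP => ordered a.
  apply/forallP => b; apply/implyP => lt_ab.
  rewrite ltnNge leq_eqVlt negb_or; apply/andP; split.
    apply: contraTneq lt_ab => /val_inj eq_ab.
    by rewrite -(permKV pi a) -(permKV pi b) eq_ab /strict eqxx andbF.
  by apply/negP => /(implyP (forallP (ordered _) _)); rewrite !permKV lt_ab.
apply/forallP => b; apply/implyP => lt_ab; apply/negP => lt_ba.
by have := implyP (forallP (ordered (pi b)) (pi a)) lt_ba; rewrite !permK ltnNge ltnW.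
Qed.

Lemma linext_seq_setT_oneline s :
  linext_seq le setT s -> exists pi, s = oneline pi.
Proof.
case/and3P=> uniq_s /forallP mem_s _.
have : perm_eq s (ord_tuple n).
  apply: uniq_perm; rewrite ?val_ord_tuple ?enum_uniq // => i.
  by rewrite (eqP (mem_s i)) in_setT mem_enum.
case/tuple_permP => pi ->; exists pi.
rewrite (eq_mktuple pi) => [|i]; last exact: tnth_ord_tuple.
by rewrite /oneline -val_ord_tuple.
Qed.

Lemma perm_oneline_linext_seqs :
  perm_eq (map oneline (enum (linext le)))
          [seq s <- seqs_of_size n n | linext_seq le setT s].
Proof.
apply: uniq_perm.
- by rewrite map_inj_uniq ?enum_uniq //; exact: oneline_inj.
- by rewrite filter_uniq // seqs_of_size_uniq.
move=> s; rewrite mem_filter mem_seqs_of_size; apply/mapP/andP => [[pi]|].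
  rewrite mem_enum -linext_seq_oneline => lin_pi ->.
  by rewrite size_map size_enum_ord.
case=> lin_s _; have [pi eq_s] := linext_seq_setT_oneline lin_s.
by exists pi; rewrite // mem_enum -linext_seq_oneline -eq_s.
Qed.

Local Open Scope ring_scope.
Variables (R : realFieldType) (x : 'I_n -> R).
Hypothesis x_gt0 : forall i, 0 < x i.

Lemma prefix_inv_prod_oneline pi : prefix_inv_prod x (oneline pi) =
  \prod_(i : 'I_n) (\sum_(k : 'I_n | (k <= i)%N) x (pi k))^-1.
Proof.
rewrite /prefix_inv_prod size_map size_enum_ord; apply: eq_bigr => i _.
by rewrite -map_take big_map take_enum_ord big_filter big_enum_cond.
Qed.

Lemma Z_P_mul_w_pi pi :
  Z_P le x * w_pi x pi = (\prod_i xdown le x i) * prefix_inv_prod x (oneline pi).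
Proof.
rewrite prefix_inv_prod_oneline /Z_P /w_pi -!big_split /=; apply: eq_bigr => i _.
by rewrite mulrA divfK //; apply: sumr_pos_neq0 x_gt0 (leqnn i).
Qed.

End OneLine.

Local Open Scope ring_scope.

Theorem theorem5p1 (R : realFieldType) (n : nat) (le : rel 'I_n) (x : 'I_n -> R) :
  rooted_forest le -> natural_labeling le -> (forall i, 0 < x i) ->
  \sum_(pi in linext le) Z_P le x * w_pi x pi = 1.
Proof.
move=> forest natural x_gt0.
rewrite (eq_bigr _ (fun pi _ => Z_P_mul_w_pi le x_gt0 pi)) -mulr_sumr.
have -> : \sum_(pi in linext le) prefix_inv_prod x (oneline pi) =
          \sum_(s <- seqs_of_size n n | linext_seq le setT s) prefix_inv_prod x s.
  by rewrite -[RHS]big_filter -(perm_big _ (perm_oneline_linext_seqs le)) big_map big_enum.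
have closedT : down_closed le [set: 'I_n] by move=> i j _ _; rewrite in_setT.
have := sum_prefix_inv_prod_linext forest natural x_gt0 closedT.
rewrite cardsT card_ord => ->.
under [X in _ * X]eq_bigl do rewrite in_setT.
by rewrite -big_split big1 //= => i _; rewrite divff ?(xdown_neq0 forest).
Qed.
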